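(* Let $F:\mathbb{R}^p\to\mathbb{R}^p$ be single-valued and $L$-Lipschitz continuous, $T:\mathbb{R}^p\rightrightarrows\mathbb{R}^p$, and suppose $\Phi:=F+T$ is maximally monotone. Let $\eta>0$ and let $\{(x^k,y^k)\}$ be generated by: start from $x^0\in\mathrm{dom}\,\Phi$, set $x^{-1}:=x^0$, and for $k\ge0$ $$y^k:=2x^k-x^{k-1},\qquad x^{k+1}:=J_{\eta T}(x^k-\eta Fy^k).$$ For $k\ge1$ let $\xi^k:=\frac1\eta(x^{k-1}-x^k)-Fy^{k-1}\in Tx^k$. Then for every $k\ge1$, $$\|Fx^k+\xi^k\|^2\le\frac{5L^2\eta^2+3}{3\eta^2}\|x^k-y^k\|^2+\frac{5L^2\eta^2+3}{5\eta^2}\|x^k-y^{k-1}\|^2.$$ Moreover, if $\sqrt2L\eta<1$, then with $\omega:=\frac{2L^2\eta^2}{1-2L^2\eta^2}>0$, for every $k\ge1$, $$\begin{aligned}\|Fx^{k+1}+\xi^{k+1}\|^2+\omega\|Fx^{k+1}-Fy^k\|^2\le{}&\|Fx^k+\xi^k\|^2+\omega\|Fx^k-Fy^{k-1}\|^2\\&-\Big(\frac{1-4L^2\eta^2}{1-2L^2\eta^2}\Big)\|Fy^k-Fx^k+\xi^{k+1}-\xi^k\|^2.\end{aligned}$$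
   Context: $J_{\eta T}:=(\mathbb{I}+\eta T)^{-1}$ is the resolvent of $\eta T$. $F$ is $L$-Lipschitz if $\|Fx-Fy\|\le L\|x-y\|$. *)

(* R^p is 'rV[R]_p over a real closed field R, with the
   Euclidean inner product and norm. Set-valued operators are relations
   T : 'rV_p -> 'rV_p -> Prop, where "T x u" means u \in T x. *)
From HB Require Import structures.
From mathcomp Require Import all_boot all_order all_algebra.
Set Implicit Arguments. Unset Strict Implicit. Unset Printing Implicit Defensive.
Import Order.TTheory GRing.Theory Num.Theory.
Local Open Scope ring_scope.

Section Defs.
Variables (R : rcfType) (p : nat).
Notation V := 'rV[R]_p.

Definition dotp (u v : V) : R := \sum_(i < p) u ord0 i * v ord0 i.
Definition enorm (u : V) : R := Num.sqrt (dotp u u).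

Definition Lipschitz (F : V -> V) (L : R) : Prop :=
  forall x y, enorm (F x - F y) <= L * enorm (x - y).

Definition opsum (F : V -> V) (T : V -> V -> Prop) : V -> V -> Prop :=
  fun x w => exists u, T x u /\ w = F x + u.

Definition monotone_op (S : V -> V -> Prop) : Prop :=
  forall x u y v, S x u -> S y v -> 0 <= dotp (x - y) (u - v).

Definition maximally_monotone (S : V -> V -> Prop) : Prop :=
  monotone_op S /\
  forall S' : V -> V -> Prop, monotone_op S' ->
    (forall x u, S x u -> S' x u) -> forall x u, S' x u -> S x u.

Definition dom (S : V -> V -> Prop) (x : V) : Prop := exists u, S x u.

(* resolvent J_{eta T} = (I + eta T)^{-1}: "resolvent eta T z x" means x \in J_{eta T} z *)
Definition resolvent (eta : R) (T : V -> V -> Prop) (z x : V) : Prop :=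
  exists u, T x u /\ z = x + eta *: u.

(* y^k := 2 x^k - x^{k-1}, with the convention x^{-1} := x^0 (k.-1 = 0 for k = 0) *)
Definition yseq (x : nat -> V) (k : nat) : V := 2%:R *: x k - x k.-1.

Definition xiseq (F : V -> V) (eta : R) (x : nat -> V) (k : nat) : V :=
  eta^-1 *: (x k.-1 - x k) - F (yseq x k.-1).

End Defs.

From HB Require Import structures.
From mathcomp Require Import all_boot all_order all_algebra.
From mathcomp Require Import ring lra.
Import Order.TTheory GRing.Theory Num.Theory.
Set Implicit Arguments. Unset Strict Implicit.
Local Open Scope ring_scope.

(* Write g^k := F x^k + xi^k and e^k := F x^k - F y^(k-1).  The reflection
   gives x^k - y^k = x^(k-1) - x^k, so g^k = (x^k - y^k)/eta + e^k, and the
   first bound follows from the triangle and Lipschitz inequalities and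
   Young's inequality with weight 5 L^2 eta^2 / 3.
   For the second, w := xi^(k+1) + F y^k satisfies x^(k+1) - x^k = -eta w and
   g^(k+1) = w + e^(k+1), so monotonicity of Phi at x^(k+1), x^k reads
   <w, g^(k+1) - g^k> <= 0, whence |g^(k+1)|^2 <= |g^k|^2 - |d|^2 + |e^(k+1)|^2
   with d := w - g^k.  As x^(k+1) - y^k = -eta (d + e^k), Lipschitz continuity
   gives |e^(k+1)|^2 <= 2 L^2 eta^2 (|d|^2 + |e^k|^2), and omega is exactly the
   weight for which (1 + omega) 2 L^2 eta^2 = omega. *)

Section EuclideanNorm.
Variables (R : rcfType) (p : nat).
Implicit Types (u v w e g : 'rV[R]_p) (a : R).

Lemma dotpC u v : dotp u v = dotp v u.
Proof. by apply: eq_bigr => i _; rewrite mulrC. Qed.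

Lemma dotpDl u v w : dotp (u + v) w = dotp u w + dotp v w.
Proof. by rewrite /dotp -big_split; apply: eq_bigr => i _; rewrite mxE mulrDl. Qed.

Lemma dotpZl a u v : dotp (a *: u) v = a * dotp u v.
Proof. by rewrite /dotp mulr_sumr; apply: eq_bigr => i _; rewrite mxE mulrA. Qed.

Lemma dotpNl u v : dotp (- u) v = - dotp u v.
Proof. by rewrite -scaleN1r dotpZl mulN1r. Qed.

Lemma dotpBl u v w : dotp (u - v) w = dotp u w - dotp v w.
Proof. by rewrite dotpDl dotpNl. Qed.

Lemma dotpDr u v w : dotp u (v + w) = dotp u v + dotp u w.
Proof. by rewrite dotpC dotpDl !(dotpC u). Qed.

Lemma dotpZr a u v : dotp u (a *: v) = a * dotp u v.
Proof. by rewrite dotpC dotpZl dotpC. Qed.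

Lemma dotpBr u v w : dotp u (v - w) = dotp u v - dotp u w.
Proof. by rewrite dotpC dotpBl !(dotpC u). Qed.

Lemma dotpp_ge0 u : 0 <= dotp u u.
Proof. by apply: sumr_ge0 => i _; rewrite -expr2 sqr_ge0. Qed.

Lemma dotpp_eq0 u : dotp u u = 0 -> u = 0.
Proof.
move=> uu0; apply/rowP => j; rewrite mxE.
have sq_ge0 (i : 'I_p) : xpredT i -> 0 <= u ord0 i * u ord0 i.
  by rewrite -expr2 sqr_ge0.
by have /eqP := psumr_eq0P sq_ge0 uu0 (isT : xpredT j); rewrite mulf_eq0 orbb => /eqP.
Qed.

Lemma enorm_ge0 u : 0 <= enorm u.
Proof. exact: sqrtr_ge0. Qed.

Lemma enorm_sqr u : enorm u ^+ 2 = dotp u u.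
Proof. by rewrite sqr_sqrtr // dotpp_ge0. Qed.

Lemma enormZ a u : enorm (a *: u) = `|a| * enorm u.
Proof. by rewrite /enorm dotpZl dotpZr mulrA -expr2 sqrtrM ?sqr_ge0 // sqrtr_sqr. Qed.

Lemma enorm_sqrZ a u : enorm (a *: u) ^+ 2 = a ^+ 2 * enorm u ^+ 2.
Proof. by rewrite !enorm_sqr dotpZl dotpZr mulrA -expr2. Qed.

Lemma enorm_sqrD u v :
  enorm (u + v) ^+ 2 = enorm u ^+ 2 + 2%:R * dotp u v + enorm v ^+ 2.
Proof. rewrite !enorm_sqr dotpDl !dotpDr (dotpC v u); ring. Qed.

Lemma enorm_sqrB u v :
  enorm (u - v) ^+ 2 = enorm u ^+ 2 - 2%:R * dotp u v + enorm v ^+ 2.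
Proof. rewrite !enorm_sqr dotpBl !dotpBr (dotpC v u); ring. Qed.

Lemma dotp_sqr_le u v : dotp u v ^+ 2 <= enorm u ^+ 2 * enorm v ^+ 2.
Proof.
rewrite !enorm_sqr; have [uu0|uu_neq0] := eqVneq (dotp u u) 0.
  rewrite uu0 mul0r (dotpp_eq0 uu0) -[0 : 'rV_p](scale0r 0) dotpZl mul0r.
  by rewrite expr0n.
have uu_gt0 : 0 < dotp u u by rewrite lt_def uu_neq0 dotpp_ge0.
have := dotpp_ge0 (dotp u u *: v - dotp u v *: u).
rewrite !dotpBl !dotpBr !dotpZl !dotpZr (dotpC v u) => proj_ge0.
have : 0 <= dotp u u * (dotp u u * dotp v v - dotp u v ^+ 2) by nra.
by rewrite pmulr_rge0 // subr_ge0.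
Qed.

Lemma dotp_le_enorm u v : dotp u v <= enorm u * enorm v.
Proof.
have := dotp_sqr_le u v; rewrite -exprMn.
have := mulr_ge0 (enorm_ge0 u) (enorm_ge0 v); nra.
Qed.

Lemma enorm_triangle u v : enorm (u + v) <= enorm u + enorm v.
Proof.
rewrite -ler_sqr ?nnegrE ?addr_ge0 ?enorm_ge0 // enorm_sqrD.
have := dotp_le_enorm u v; lra.
Qed.

Lemma enorm_sqrD_le u v :
  enorm (u + v) ^+ 2 <= 2%:R * enorm u ^+ 2 + 2%:R * enorm v ^+ 2.
Proof.
have := sqr_ge0 (enorm (u - v)); rewrite enorm_sqrD enorm_sqrB; lra.
Qed.

Lemma enorm_sqrD_le_of_dotp_le0 u e g : dotp u (u + e - g) <= 0 ->
  enorm (u + e) ^+ 2 <= enorm g ^+ 2 - enorm (u - g) ^+ 2 + enorm e ^+ 2.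
Proof.
rewrite dotpBr dotpDr -enorm_sqr enorm_sqrD enorm_sqrB => dotp_le0; lra.
Qed.

Variable F : 'rV[R]_p -> 'rV[R]_p.

Lemma Lipschitz_sqr L u v : Lipschitz F L ->
  enorm (F u - F v) ^+ 2 <= L ^+ 2 * enorm (u - v) ^+ 2.
Proof.
move=> /(_ u v) F_lip; rewrite -exprMn.
by rewrite ler_sqr ?nnegrE ?(le_trans _ F_lip) ?enorm_ge0.
Qed.

Lemma Lipschitz_lt0_enorm0 L u : Lipschitz F L -> L < 0 -> enorm u = 0.
Proof.
move=> /(_ u 0) F_lip L_lt0; rewrite subr0 in F_lip.
have := enorm_ge0 (F u - F 0); have := enorm_ge0 u; nra.
Qed.

End EuclideanNorm.

Lemma young_sqr_le (R : realFieldType) (eta L a b : R) : 0 < eta ->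
  (eta^-1 * a + L * b) ^+ 2 <=
    (5%:R * L ^+ 2 * eta ^+ 2 + 3%:R) / (3%:R * eta ^+ 2) * a ^+ 2
  + (5%:R * L ^+ 2 * eta ^+ 2 + 3%:R) / (5%:R * eta ^+ 2) * b ^+ 2.
Proof.
move=> eta_gt0; have eta_neq0 := lt0r_neq0 eta_gt0; rewrite -subr_ge0.
have -> : (5%:R * L ^+ 2 * eta ^+ 2 + 3%:R) / (3%:R * eta ^+ 2) * a ^+ 2
        + (5%:R * L ^+ 2 * eta ^+ 2 + 3%:R) / (5%:R * eta ^+ 2) * b ^+ 2
        - (eta^-1 * a + L * b) ^+ 2
        = (5%:R * eta * L * a - 3%:R * b) ^+ 2 / (15%:R * eta ^+ 2) by field.
by rewrite divr_ge0 ?sqr_ge0 // mulr_ge0 ?sqr_ge0 ?ler0n.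
Qed.

Lemma lyapunov_descent_scalar (R : realFieldType) (s G0 G1 E0 E1 D : R) :
  2%:R * s < 1 -> G1 <= G0 - D + E1 -> E1 <= 2%:R * s * (D + E0) ->
  G1 + 2%:R * s / (1 - 2%:R * s) * E1
    <= G0 + 2%:R * s / (1 - 2%:R * s) * E0
       - (1 - 4%:R * s) / (1 - 2%:R * s) * D.
Proof.
move=> s_lt G1_le E1_le; set omega := 2%:R * s / _.
have den_gt0 : 0 < 1 - 2%:R * s by rewrite subr_gt0.
have den_neq0 := lt0r_neq0 den_gt0.
have -> : (1 - 4%:R * s) / (1 - 2%:R * s) = 1 - omega by rewrite /omega; field.
have omega1E : 1 + omega = (1 - 2%:R * s)^-1 by rewrite /omega; field.
have omegaE : (1 + omega) * (2%:R * s) = omega by rewrite omega1E /omega; field.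
have : (1 + omega) * E1 <= (1 + omega) * (2%:R * s * (D + E0)).
  by rewrite ler_wpM2l // omega1E invr_ge0 ltW.
by rewrite mulrA omegaE; lra.
Qed.

Section ReflectedForwardBackward.
Variables (R : rcfType) (p : nat) (F : 'rV[R]_p -> 'rV[R]_p).
Variables (T : 'rV[R]_p -> 'rV[R]_p -> Prop) (L eta : R) (x : nat -> 'rV[R]_p).
Hypothesis eta_gt0 : 0 < eta.
Hypothesis F_lip : Lipschitz F L.
Hypothesis Phi_mono : monotone_op (opsum F T).
Hypothesis x_step : forall k, resolvent eta T (x k - eta *: F (yseq x k)) (x k.+1).

Local Notation y := (yseq x).
Local Notation xi := (xiseq F eta x).

Let eta_neq0 : eta != 0 := lt0r_neq0 eta_gt0.

Lemma residual_decomp k :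
  F (x k.+1) + xi k.+1 = eta^-1 *: (x k.+1 - y k.+1) + (F (x k.+1) - F (y k)).
Proof. by apply/rowP => j; rewrite !mxE; ring. Qed.

Lemma residual_sqr_le k :
  enorm (F (x k.+1) + xi k.+1) ^+ 2 <=
    (5%:R * L ^+ 2 * eta ^+ 2 + 3%:R) / (3%:R * eta ^+ 2)
      * enorm (x k.+1 - y k.+1) ^+ 2
  + (5%:R * L ^+ 2 * eta ^+ 2 + 3%:R) / (5%:R * eta ^+ 2)
      * enorm (x k.+1 - y k) ^+ 2.
Proof.
apply: le_trans (young_sqr_le L _ _ eta_gt0).
have residual_le : enorm (F (x k.+1) + xi k.+1)
    <= eta^-1 * enorm (x k.+1 - y k.+1) + L * enorm (x k.+1 - y k).
  rewrite residual_decomp; apply: le_trans (enorm_triangle _ _) _.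
  rewrite enormZ ger0_norm ?lerD2l ?F_lip //.
  by rewrite invr_ge0 ltW.
by rewrite ler_sqr ?nnegrE ?(le_trans _ residual_le) ?enorm_ge0.
Qed.

Lemma xiseq_resolvent k : T (x k.+1) (xi k.+1).
Proof.
have [u [Tu step_eq]] := x_step k.
suff -> : xi k.+1 = u by [].
apply/rowP => j; have := congr1 (fun v : 'rV_p => v ord0 j) step_eq.
by rewrite /xiseq /= !mxE => /eqP; rewrite -subr_eq => /eqP <-; field.
Qed.

Lemma x_succ_sub k : x k.+1 - x k = - eta *: (xi k.+1 + F (y k)).
Proof. by apply/rowP => j; rewrite !mxE; field. Qed.

Lemma residual_lyapunov_descent k : 2%:R * L ^+ 2 * eta ^+ 2 < 1 ->
  enorm (F (x k.+2) + xi k.+2) ^+ 2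
    + (2%:R * L ^+ 2 * eta ^+ 2) / (1 - 2%:R * L ^+ 2 * eta ^+ 2)
      * enorm (F (x k.+2) - F (y k.+1)) ^+ 2
  <= enorm (F (x k.+1) + xi k.+1) ^+ 2
    + (2%:R * L ^+ 2 * eta ^+ 2) / (1 - 2%:R * L ^+ 2 * eta ^+ 2)
      * enorm (F (x k.+1) - F (y k)) ^+ 2
    - (1 - 4%:R * L ^+ 2 * eta ^+ 2) / (1 - 2%:R * L ^+ 2 * eta ^+ 2)
      * enorm (F (y k.+1) - F (x k.+1) + xi k.+2 - xi k.+1) ^+ 2.
Proof.
move=> s_lt1.
set g0 := F (x k.+1) + xi k.+1; set e0 := F (x k.+1) - F (y k).
set e1 := F (x k.+2) - F (y k.+1); set d := _ + xi k.+2 - xi k.+1.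
pose w1 := xi k.+2 + F (y k.+1).
have g1E : F (x k.+2) + xi k.+2 = w1 + e1 by apply/rowP => j; rewrite !mxE; ring.
have dE : d = w1 - g0 by apply/rowP => j; rewrite !mxE; ring.
have mono : dotp w1 (w1 + e1 - g0) <= 0.
  have g_in_Phi i : opsum F T (x i.+1) (F (x i.+1) + xi i.+1).
    by exists (xi i.+1); split; last by []; apply: xiseq_resolvent.
  have := Phi_mono (g_in_Phi k.+1) (g_in_Phi k).
  by rewrite x_succ_sub g1E dotpZl mulNr oppr_ge0 pmulr_rle0.
have desc : enorm (w1 + e1) ^+ 2 <= enorm g0 ^+ 2 - enorm d ^+ 2 + enorm e1 ^+ 2.
  by rewrite dE; apply: enorm_sqrD_le_of_dotp_le0.
have step_diff : x k.+2 - y k.+1 = - eta *: (d + e0).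
  have -> : d + e0 = w1 - (xi k.+1 + F (y k)).
    by apply/rowP => j; rewrite !mxE; ring.
  have -> : x k.+2 - y k.+1 = (x k.+2 - x k.+1) - (x k.+1 - x k).
    by apply/rowP => j; rewrite !mxE; ring.
  by rewrite !x_succ_sub scalerBr.
have lip :
    enorm e1 ^+ 2 <= 2%:R * (L ^+ 2 * eta ^+ 2) * (enorm d ^+ 2 + enorm e0 ^+ 2).
  apply: le_trans (Lipschitz_sqr _ _ F_lip) _.
  rewrite step_diff enorm_sqrZ sqrrN.
  have := enorm_sqrD_le d e0; have := mulr_ge0 (sqr_ge0 L) (sqr_ge0 eta); nra.
have s_lt1' : 2%:R * (L ^+ 2 * eta ^+ 2) < 1 by rewrite mulrA.
have := lyapunov_descent_scalar s_lt1' desc lip.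
by rewrite -g1E !mulrA.
Qed.

End ReflectedForwardBackward.

Theorem lemma8 (R : rcfType) (p : nat) (F : 'rV[R]_p -> 'rV[R]_p)
  (T : 'rV[R]_p -> 'rV[R]_p -> Prop) (L eta : R) (x : nat -> 'rV[R]_p) :
  Lipschitz F L ->
  maximally_monotone (opsum F T) ->
  0 < eta ->
  dom (opsum F T) (x 0%N) ->
  (forall k : nat,
     resolvent eta T (x k - eta *: F (yseq x k)) (x k.+1)) ->
  (forall k : nat, (1 <= k)%N ->
     enorm (F (x k) + xiseq F eta x k) ^+ 2 <=
       (5%:R * L ^+ 2 * eta ^+ 2 + 3%:R) / (3%:R * eta ^+ 2)
         * enorm (x k - yseq x k) ^+ 2
     + (5%:R * L ^+ 2 * eta ^+ 2 + 3%:R) / (5%:R * eta ^+ 2)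
         * enorm (x k - yseq x k.-1) ^+ 2)
  /\
  (Num.sqrt 2%:R * L * eta < 1 ->
   let omega := (2%:R * L ^+ 2 * eta ^+ 2) / (1 - 2%:R * L ^+ 2 * eta ^+ 2) in
   forall k : nat, (1 <= k)%N ->
     enorm (F (x k.+1) + xiseq F eta x k.+1) ^+ 2
       + omega * enorm (F (x k.+1) - F (yseq x k)) ^+ 2
     <= enorm (F (x k) + xiseq F eta x k) ^+ 2
       + omega * enorm (F (x k) - F (yseq x k.-1)) ^+ 2
       - (1 - 4%:R * L ^+ 2 * eta ^+ 2) / (1 - 2%:R * L ^+ 2 * eta ^+ 2)
         * enorm (F (yseq x k) - F (x k) + xiseq F eta x k.+1 - xiseq F eta x k) ^+ 2).
Proof.
move=> F_lip [Phi_mono _] eta_gt0 _ x_step.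
split=> [[|k] // _ | sL_lt1 omega [|k] // _]; first exact: residual_sqr_le.
(* For L < 0 the bound on sqrt 2 L eta says nothing, but then every vector
   has norm 0. *)
have [L_lt0 | L_ge0] := ltP L 0.
  by rewrite !(Lipschitz_lt0_enorm0 _ F_lip L_lt0) expr0n !mulr0 subr0.
have s_lt1 : 2%:R * L ^+ 2 * eta ^+ 2 < 1.
  have sL_ge0 : 0 <= Num.sqrt 2%:R * L * eta.
    by rewrite !mulr_ge0 ?sqrtr_ge0 ?(ltW eta_gt0).
  have := sL_lt1; rewrite -(expr_lt1 (_ : 0 < 2)%N sL_ge0) //.
  by rewrite !exprMn sqr_sqrtr ?ler0n.
exact: residual_lyapunov_descent eta_gt0 F_lip Phi_mono x_step _ s_lt1.
Qed.
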